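(* Let $G=(V,E)$ be a graph with $m\ge 1$ edges, let $d_v := \deg(v)/(2m)$ for $v\in V$, and let $p^\flat$ be the in-degree distribution of any biased orientation of $G$. Then $$\mathrm{OPT}(G) \ \ge\ \sum_{v\in V} -p^\flat_v \log\frac{\deg(v)}{m} \ =\ H(p^\flat) + D(p^\flat\parallel d) - 1,$$ where $D(p\parallel q) := \sum_{i} p_i\log(p_i/q_i)$ is the relative entropy.
   Context: All graphs are finite, undirected and loopless, but multiple edges are allowed. For an orientation $\vec G$ of $G$, the in-degree distribution is $p_v := \rho_{\vec G}(v)/m$, where $\rho_{\vec G}(v)$ is the in-degree of $v$. Entropy: $H(p) := \sum_{v} -p_v\log p_v$, $\log$ base $2$, $-0\log 0:=0$ (and in the relative entropy terms with $p_i=0$ are $0$). $\mathrm{OPT}(G)$ is the minimum entropy of the in-degree distribution of an orientation of $G$. An orientation is biased if each edge $vw$ with $\deg(v)>\deg(w)$ is oriented toward $v$. *)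

From Stdlib Require Import Reals List Arith.
Import ListNotations.
Open Scope R_scope.

(* A graph on vertex set {0,...,n-1} is a list of edges (u,w) (multi-edges
   allowed by repetition in the list). It is valid when every edge has both
   endpoints < n and is not a loop. *)
Definition graph := list (nat * nat).

Definition valid_graph (n : nat) (E : graph) : Prop :=
  Forall (fun e => (fst e < n)%nat /\ (snd e < n)%nat /\ fst e <> snd e) E.

Definition nedges (E : graph) : nat := length E.

(* degree: number of edges incident to v (loopless, so each counts once) *)
Definition deg (E : graph) (v : nat) : nat :=
  length (filter (fun e => orb (Nat.eqb (fst e) v) (Nat.eqb (snd e) v)) E).

(* An orientation is a list of booleans, one per edge (same length as E):
   for edge (u,w) with boolean b, the edge points toward w if b = true,
   toward u if b = false. *)
Definition orientation := list bool.

Definition valid_orientation (E : graph) (o : orientation) : Prop :=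
  length o = length E.

Definition ehead (e : nat * nat) (b : bool) : nat :=
  if b then snd e else fst e.

Definition indeg (E : graph) (o : orientation) (v : nat) : nat :=
  length (filter (fun eb => Nat.eqb (ehead (fst eb) (snd eb)) v) (combine E o)).

Definition indeg_dist (E : graph) (o : orientation) (v : nat) : R :=
  INR (indeg E o v) / INR (nedges E).

Definition log2 (x : R) : R := ln x / ln 2.

Definition vsum (n : nat) (f : nat -> R) : R :=
  fold_right Rplus 0 (map f (seq 0 n)).

Definition entropy (n : nat) (p : nat -> R) : R :=
  vsum n (fun v => if Req_EM_T (p v) 0 then 0 else - p v * log2 (p v)).

Definition rel_entropy (n : nat) (p q : nat -> R) : R :=
  vsum n (fun v => if Req_EM_T (p v) 0 then 0 else p v * log2 (p v / q v)).

Fixpoint all_bool_lists (k : nat) : list (list bool) :=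
  match k with
  | O => [ [] ]
  | S k' => map (cons true) (all_bool_lists k') ++ map (cons false) (all_bool_lists k')
  end.

Definition OPT (n : nat) (E : graph) : R :=
  match map (fun o => entropy n (indeg_dist E o)) (all_bool_lists (length E)) with
  | [] => 0
  | x :: xs => fold_left Rmin xs x
  end.

Definition biased (E : graph) (o : orientation) : Prop :=
  forall i e b, nth_error E i = Some e -> nth_error o i = Some b ->
    ((deg E (fst e) > deg E (snd e))%nat -> ehead e b = fst e) /\
    ((deg E (snd e) > deg E (fst e))%nat -> ehead e b = snd e).

From Stdlib Require Import Reals List Arith Lia Lra.
Open Scope R_scope.

(* Write m for the number of edges and p for the in-degree
   distribution of an orientation.  Since p_v = indeg(v)/m, a vertex sum
   sum_v -p_v log L(v) is, by double counting, the edge sum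
   sum_e -log L(head e) / m.  For an arbitrary orientation o',
   indeg(v) <= deg(v) gives H(p') >= sum_e -log(deg(head' e)/m)/m, and a
   biased orientation chooses for every edge the endpoint of larger degree,
   so it minimizes this edge sum; hence every orientation has entropy at
   least S, and so does OPT.  The identity S = H + D - 1 holds termwise:
   -p log(g) = -p log p + p log(p/(g/2)) - p, and the p_v sum to 1.
   The file develops vertex sums, edge sums and double counting, then the
   lower bound, then the identity, and finally the theorem. *)

Lemma fold_right_Rplus_init (l : list R) (a : R) :
  fold_right Rplus a l = fold_right Rplus 0 l + a.
Proof. induction l as [|x l IH]; simpl; [ring | rewrite IH; ring]. Qed.

Lemma vsum_S (n : nat) (f : nat -> R) : vsum (S n) f = vsum n f + f n.
Proof.
  unfold vsum. rewrite seq_S, map_app, fold_right_app. simpl.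
  rewrite fold_right_Rplus_init. ring.
Qed.

Lemma vsum_ext (n : nat) (f g : nat -> R) :
  (forall v, (v < n)%nat -> f v = g v) -> vsum n f = vsum n g.
Proof.
  induction n as [|n IH]; intros H; [reflexivity|].
  rewrite !vsum_S, (H n) by lia. f_equal. apply IH. intros v Hv. apply H. lia.
Qed.

Lemma vsum_plus (n : nat) (f g : nat -> R) :
  vsum n (fun v => f v + g v) = vsum n f + vsum n g.
Proof. induction n as [|n IH]; [unfold vsum; simpl; ring | rewrite !vsum_S, IH; ring]. Qed.

Lemma vsum_minus (n : nat) (f g : nat -> R) :
  vsum n (fun v => f v - g v) = vsum n f - vsum n g.
Proof. induction n as [|n IH]; [unfold vsum; simpl; ring | rewrite !vsum_S, IH; ring]. Qed.

Lemma vsum_point_mass (n h : nat) (c : R) :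
  vsum n (fun v => if Nat.eqb h v then c else 0) = if Nat.ltb h n then c else 0.
Proof.
  induction n as [|n IH]; [reflexivity|].
  rewrite vsum_S, IH.
  destruct (Nat.ltb_spec h n), (Nat.eqb_spec h n), (Nat.ltb_spec h (S n));
    (lia || ring).
Qed.

(* Note that indeg E o is by definition count_heads (combine E o). *)

Definition head (eb : (nat * nat) * bool) : nat := ehead (fst eb) (snd eb).

Definition esum (l : list ((nat * nat) * bool)) (g : (nat * nat) * bool -> R) : R :=
  fold_right Rplus 0 (map g l).

Definition count_heads (l : list ((nat * nat) * bool)) (v : nat) : nat :=
  length (filter (fun eb => Nat.eqb (head eb) v) l).

Lemma esum_const (l : list ((nat * nat) * bool)) (c : R) :
  esum l (fun _ => c) = INR (length l) * c.
Proof.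
  unfold esum. induction l as [|eb l IH]; [simpl; ring|].
  cbn [map fold_right length]. rewrite IH, S_INR. ring.
Qed.

Lemma esum_le (l : list ((nat * nat) * bool)) (g h : (nat * nat) * bool -> R) :
  (forall eb, In eb l -> g eb <= h eb) -> esum l g <= esum l h.
Proof.
  unfold esum. induction l as [|eb l IH]; intros H; simpl; [lra|].
  apply Rplus_le_compat; [apply H; simpl; auto | apply IH; intros; apply H; simpl; auto].
Qed.

(* Comparison of the edge sums of two orientations of the same edge list,
   edge by edge (needed because biasedness is stated by edge index). *)
Lemma esum_combine_le (E : graph) (o o' : orientation) (g : (nat * nat) * bool -> R) :
  length o = length E -> length o' = length E ->
  (forall i e b b', nth_error E i = Some e -> nth_error o i = Some b ->
      nth_error o' i = Some b' -> g (e, b) <= g (e, b')) ->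
  esum (combine E o) g <= esum (combine E o') g.
Proof.
  unfold esum. revert o o'.
  induction E as [|e E IH]; intros o o' Ho Ho' H; [simpl; lra|].
  destruct o as [|b o]; [discriminate|]. destruct o' as [|b' o']; [discriminate|].
  simpl. apply Rplus_le_compat.
  - apply (H 0%nat); reflexivity.
  - apply IH; [simpl in *; lia | simpl in *; lia |].
    intros i. apply (H (S i)).
Qed.

Lemma double_counting (n : nat) (l : list ((nat * nat) * bool)) (f : nat -> R) :
  (forall eb, In eb l -> (head eb < n)%nat) ->
  vsum n (fun v => INR (count_heads l v) * f v) = esum l (fun eb => f (head eb)).
Proof.
  induction l as [|eb l IH]; intros Hl.
  - clear Hl. induction n as [|n IHn]; [reflexivity|].
    rewrite vsum_S, IHn. simpl. ring.
  - rewrite (vsum_ext n _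
      (fun v => (if Nat.eqb (head eb) v then f (head eb) else 0)
                + INR (count_heads l v) * f v)).
    + rewrite vsum_plus, vsum_point_mass, IH by (intros; apply Hl; simpl; auto).
      assert (Heb : (head eb < n)%nat) by (apply Hl; simpl; auto).
      apply Nat.ltb_lt in Heb. rewrite Heb. reflexivity.
    + intros v _. unfold count_heads. cbn [filter].
      destruct (Nat.eqb_spec (head eb) v) as [<-|]; cbn [length];
        [rewrite S_INR|]; ring.
Qed.

Lemma heads_in_range (n : nat) (E : graph) (o : orientation) eb :
  valid_graph n E -> In eb (combine E o) -> (head eb < n)%nat.
Proof.
  intros Hv Hin. destruct eb as [e b]. apply in_combine_l in Hin.
  unfold valid_graph in Hv. rewrite Forall_forall in Hv.
  destruct (Hv e Hin) as [Hfst [Hsnd _]]. destruct b; assumption.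
Qed.

Lemma indeg_le_deg (E : graph) (o : orientation) (v : nat) :
  (indeg E o v <= deg E v)%nat.
Proof.
  revert o; induction E as [|[x y] E IH]; intros o; unfold indeg, deg in *; [simpl; lia|].
  destruct o as [|b o]; simpl; [lia|]. specialize (IH o).
  destruct b; simpl; destruct (Nat.eqb x v), (Nat.eqb y v); simpl; lia.
Qed.

Lemma head_indeg_pos (E : graph) (o : orientation) eb :
  In eb (combine E o) -> (1 <= indeg E o (head eb))%nat.
Proof.
  intros Hin. change (indeg E o) with (count_heads (combine E o)). unfold count_heads.
  assert (Hf : In eb (filter (fun eb' => Nat.eqb (head eb') (head eb)) (combine E o))).
  { apply filter_In. split; [assumption | apply Nat.eqb_refl]. }
  destruct (filter _ _); simpl in *; [contradiction | lia].
Qed.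

Lemma endpoint_deg_pos (E : graph) e (b : bool) : In e E -> (1 <= deg E (ehead e b))%nat.
Proof.
  intros Hin. unfold deg.
  assert (Hf : In e (filter (fun e' => orb (Nat.eqb (fst e') (ehead e b))
                                          (Nat.eqb (snd e') (ehead e b))) E)).
  { apply filter_In. split; [assumption|].
    destruct b; simpl; rewrite Nat.eqb_refl; [apply Bool.orb_true_r | reflexivity]. }
  destruct (filter _ E); simpl in *; [contradiction | lia].
Qed.

Lemma biased_head_max_deg (n : nat) (E : graph) (o : orientation) i e (b b' : bool) :
  valid_graph n E -> biased E o ->
  nth_error E i = Some e -> nth_error o i = Some b ->
  (deg E (ehead e b') <= deg E (ehead e b))%nat.
Proof.
  intros Hv Hb He Hob.
  assert (Hloop : fst e <> snd e).
  { unfold valid_graph in Hv. rewrite Forall_forall in Hv.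
    apply (Hv e (nth_error_In _ _ He)). }
  destruct (Hb i e b He Hob) as [Hfst Hsnd].
  destruct b, b'; simpl in *; [lia | | | lia].
  - destruct (Nat.le_gt_cases (deg E (fst e)) (deg E (snd e))) as [Hle | Hgt]; [lia|].
    specialize (Hfst Hgt). congruence.
  - destruct (Nat.le_gt_cases (deg E (snd e)) (deg E (fst e))) as [Hle | Hgt]; [lia|].
    specialize (Hsnd Hgt). congruence.
Qed.

Lemma ln2_pos : 0 < ln 2.
Proof. pose proof ln_lt_2. lra. Qed.

Lemma log2_le (x y : R) : 0 < x -> x <= y -> log2 x <= log2 y.
Proof.
  intros Hx [Hlt | ->]; [|lra]. unfold log2, Rdiv.
  apply Rmult_le_compat_r; [left; apply Rinv_0_lt_compat, ln2_pos|].
  left. apply ln_increasing; assumption.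
Qed.

Lemma log2_div_half (p g : R) : 0 < p -> 0 < g -> log2 (p / (g / 2)) = log2 p - log2 g + 1.
Proof.
  intros Hp Hg. unfold log2.
  replace (p / (g / 2)) with (p * (2 * / g)) by (field; lra).
  rewrite ln_mult, ln_mult, ln_Rinv by
    (try apply Rmult_lt_0_compat; try apply Rinv_0_lt_compat; lra).
  pose proof ln2_pos. field. lra.
Qed.

Lemma vertex_sum_to_edge_sum (n : nat) (E : graph) (o : orientation) (L : nat -> R) :
  valid_graph n E -> (1 <= nedges E)%nat ->
  vsum n (fun v => if Req_EM_T (indeg_dist E o v) 0 then 0 else - indeg_dist E o v * L v)
  = esum (combine E o) (fun eb => - L (head eb) / INR (nedges E)).
Proof.
  intros Hv Hm. assert (Hm0 : 0 < INR (nedges E)) by (apply lt_0_INR; lia).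
  rewrite (vsum_ext n _ (fun v => INR (count_heads (combine E o) v) * (- L v / INR (nedges E)))).
  - apply double_counting. intros eb. apply heads_in_range. assumption.
  - intros v _. change (count_heads (combine E o) v) with (indeg E o v).
    unfold indeg_dist. destruct (Req_EM_T _ 0) as [Hz | Hnz].
    + assert (Hi : INR (indeg E o v) = 0).
      { apply (Rmult_eq_reg_r (/ INR (nedges E))); [|apply Rinv_neq_0_compat; lra].
        rewrite Rmult_0_l. exact Hz. }
      rewrite Hi. ring.
    + field. lra.
Qed.

(* The cost of an oriented edge: -log2(deg(head)/m)/m.  The quantity S of
   the theorem is the total cost of the biased orientation. *)
Definition deg_cost (E : graph) (eb : (nat * nat) * bool) : R :=
  - log2 (INR (deg E (head eb)) / INR (nedges E)) / INR (nedges E).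

(* Since indeg <= deg, the entropy of an orientation is at least its cost. *)
Lemma entropy_ge_cost (n : nat) (E : graph) (o : orientation) :
  valid_graph n E -> (1 <= nedges E)%nat ->
  entropy n (indeg_dist E o) >= esum (combine E o) (deg_cost E).
Proof.
  intros Hv Hm. assert (Hm0 : 0 < INR (nedges E)) by (apply lt_0_INR; lia).
  unfold entropy. rewrite (vertex_sum_to_edge_sum n E o (fun v => log2 (indeg_dist E o v)) Hv Hm).
  apply Rle_ge, esum_le. intros eb Hin. unfold deg_cost, Rdiv.
  apply Rmult_le_compat_r; [left; apply Rinv_0_lt_compat; assumption|].
  apply Ropp_le_contravar. unfold indeg_dist. apply log2_le.
  - apply Rdiv_lt_0_compat; [apply lt_0_INR|]; [pose proof (head_indeg_pos E o eb Hin); lia | lra].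
  - apply Rmult_le_compat_r; [left; apply Rinv_0_lt_compat; assumption|].
    apply le_INR, indeg_le_deg.
Qed.

Lemma biased_minimizes_cost (n : nat) (E : graph) (o o' : orientation) :
  valid_graph n E -> (1 <= nedges E)%nat ->
  length o = length E -> length o' = length E -> biased E o ->
  esum (combine E o) (deg_cost E) <= esum (combine E o') (deg_cost E).
Proof.
  intros Hv Hm Ho Ho' Hb. assert (Hm0 : 0 < INR (nedges E)) by (apply lt_0_INR; lia).
  apply esum_combine_le; [assumption | assumption |].
  intros i e b b' He Hob _. unfold deg_cost, head, Rdiv. simpl.
  pose proof (biased_head_max_deg n E o i e b b' Hv Hb He Hob) as Hmax.
  pose proof (endpoint_deg_pos E e b' (nth_error_In _ _ He)) as Hpos.
  apply Rmult_le_compat_r; [left; apply Rinv_0_lt_compat; assumption|].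
  apply Ropp_le_contravar, log2_le.
  - apply Rmult_lt_0_compat; [apply lt_0_INR; lia | apply Rinv_0_lt_compat; assumption].
  - apply Rmult_le_compat_r; [left; apply Rinv_0_lt_compat; assumption|].
    apply le_INR, Hmax.
Qed.

Lemma fold_left_Rmin_ge (xs : list R) (x S : R) :
  x >= S -> (forall y, In y xs -> y >= S) -> fold_left Rmin xs x >= S.
Proof.
  revert x; induction xs as [|a xs IH]; intros x Hx H; simpl; [assumption|].
  apply IH; [|intros; apply H; simpl; auto].
  unfold Rmin. destruct (Rle_dec x a); [assumption | apply H; simpl; auto].
Qed.

Lemma all_bool_lists_length (k : nat) (o : list bool) :
  In o (all_bool_lists k) -> length o = k.
Proof.
  revert o; induction k as [|k IH]; simpl; intros o H.
  - destruct H as [<-|[]]; reflexivity.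
  - apply in_app_or in H. destruct H as [H|H]; apply in_map_iff in H;
      destruct H as [x [<- Hx]]; simpl; f_equal; auto.
Qed.

Lemma all_bool_lists_inhabited (k : nat) : exists o, In o (all_bool_lists k).
Proof.
  induction k as [|k [o Ho]]; simpl; [eauto|].
  exists (true :: o). apply in_or_app. left. apply in_map. assumption.
Qed.

Lemma OPT_ge (n : nat) (E : graph) (S : R) :
  (forall o, length o = length E -> entropy n (indeg_dist E o) >= S) -> OPT n E >= S.
Proof.
  intros H. unfold OPT.
  destruct (all_bool_lists_inhabited (length E)) as [o0 Ho0].
  assert (All : forall y, In y (map (fun o => entropy n (indeg_dist E o))
                                    (all_bool_lists (length E))) -> y >= S).
  { intros y Hy. apply in_map_iff in Hy. destruct Hy as [o [<- Ho]].
    apply H, all_bool_lists_length, Ho. }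
  destruct (map _ _) as [|x xs] eqn:Hmap.
  - apply (in_map (fun o => entropy n (indeg_dist E o))) in Ho0.
    rewrite Hmap in Ho0. destruct Ho0.
  - apply fold_left_Rmin_ge; [apply All; simpl; auto | intros; apply All; simpl; auto].
Qed.

Lemma indeg_dist_sum (n : nat) (E : graph) (o : orientation) :
  valid_graph n E -> (1 <= nedges E)%nat -> valid_orientation E o ->
  vsum n (indeg_dist E o) = 1.
Proof.
  intros Hv Hm Ho. assert (Hm0 : 0 < INR (nedges E)) by (apply lt_0_INR; lia).
  rewrite (vsum_ext n _ (fun v => INR (count_heads (combine E o) v) * / INR (nedges E)))
    by reflexivity.
  rewrite double_counting by (intros eb; apply heads_in_range; assumption).
  rewrite esum_const, length_combine, Ho, Nat.min_id.
  unfold nedges. field. unfold nedges in Hm0. lra.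
Qed.

Lemma cross_entropy_split (p g : R) :
  (p <> 0 -> 0 < p /\ 0 < g) ->
  (if Req_EM_T p 0 then 0 else - p * log2 g)
  = (if Req_EM_T p 0 then 0 else - p * log2 p)
    + (if Req_EM_T p 0 then 0 else p * log2 (p / (g / 2))) - p.
Proof.
  intros Hpos. destruct (Req_EM_T p 0) as [->|Hp]; [ring|].
  destruct (Hpos Hp) as [Hp0 Hg0]. rewrite log2_div_half by assumption. ring.
Qed.

Theorem mainTheorem4 (n : nat) (E : graph) (o : orientation) :
  valid_graph n E ->
  (1 <= nedges E)%nat ->
  valid_orientation E o ->
  biased E o ->
  let m := INR (nedges E) in
  let d := fun v => INR (deg E v) / (2 * m) in
  let p := indeg_dist E o in
  let S := vsum n (fun v => if Req_EM_T (p v) 0 then 0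
                            else - p v * log2 (INR (deg E v) / m)) in
  OPT n E >= S /\ S = entropy n p + rel_entropy n p d - 1.
Proof.
  intros Hv Hm Ho Hb m d p S.
  assert (Hm0 : 0 < m) by (apply lt_0_INR; lia).
  assert (HS : S = esum (combine E o) (deg_cost E))
    by exact (vertex_sum_to_edge_sum n E o (fun v => log2 (INR (deg E v) / m)) Hv Hm).
  split.
  - apply OPT_ge. intros o' Ho'. rewrite HS.
    apply Rge_trans with (esum (combine E o') (deg_cost E)); [now apply entropy_ge_cost|].
    apply Rle_ge, (biased_minimizes_cost n); assumption.
  - unfold S, entropy, rel_entropy.
    rewrite <- (indeg_dist_sum n E o Hv Hm Ho), <- vsum_plus, <- vsum_minus.
    apply vsum_ext. intros v _.
    replace (d v) with (INR (deg E v) / m / 2) by (unfold d; field; lra).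
    apply cross_entropy_split. intros Hp. unfold p, indeg_dist in *.
    assert (Hi : (1 <= indeg E o v)%nat).
    { destruct (indeg E o v); [exfalso; apply Hp; simpl; unfold Rdiv; ring | lia]. }
    pose proof (indeg_le_deg E o v).
    split; apply Rdiv_lt_0_compat; try apply lt_0_INR; fold m; lia || lra.
Qed.
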